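(* Let $G$ be a group which is the semidirect product of a normal subgroup $A$ and a subgroup $B$ (so $G=\langle A,B\rangle$, $A\trianglelefteq G$, $A\cap B=1$), with action $\theta:B\to \mathrm{Aut}(A)$, $\theta(b)(a)=a^b=b^{-1}ab$. Let $1\to R_1\to F_1\xrightarrow{\nu_1} A\to 1$ and $1\to R_2\to F_2\xrightarrow{\nu_2} B\to 1$ be free presentations of $A$ and $B$ (so $F_1,F_2$ are free groups, $\nu_1,\nu_2$ are epimorphisms with kernels $R_1,R_2$). Let $F=F_1*F_2$ be the free product, let $$S=\big\langle f_1^{-1}\overline{f_1}\,[f_2,f_1]\ \big|\ f_1,\overline{f_1}\in F_1,\ f_2\in F_2,\ \nu_1(\overline{f_1})=\theta(\nu_2 f_2)(\nu_1 f_1)\big\rangle^F,$$ and let $R=R_1^F R_2^F S$ (so that $1\to R\to F\to G\to 1$ is a free presentation of $G$). For $c\ge 1$ let $$\textstyle\prod[R_2,F_1,F_2]_c=\big\langle [r_2,f_1,\ldots,f_c]\ \big|\ r_2\in R_2,\ f_i\in F_1\cup F_2\ (1\le i\le c),\ f_k\in F_1 \text{ for some } k\big\rangle^F,$$ so that in particular $\prod[R_2,F_1,F_2]_1=[R_2,F_1]$. Then: (i) $R_1$ and $[R_2,F_1]$ are subgroups of $S$; (ii) $R=R_2S$; (iii) $R\cap\gamma_{c+1}(F)=(R_2\cap\gamma_{c+1}(F_2))(S\cap\gamma_{c+1}(F))$ for all $c\ge 1$; (iv) $[R,{}_cF]=[R_2,{}_cF_2]\,\prod[R_2,F_1,F_2]_c\,[S,{}_cF]$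 for all $c\ge 1$.
   Context: Commutators are $[x,y]=x^{-1}y^{-1}xy$ and are left-normed: $[x_1,\ldots,x_{n+1}]=[[x_1,\ldots,x_n],x_{n+1}]$. For a subset $X$ of $F$, $X^F$ or $\langle X\rangle^F$ denotes the normal closure of (the subgroup generated by) $X$ in $F$. $\gamma_{c+1}(F)$ is the $(c+1)$-st term of the lower central series of $F$, and $[R,{}_cF]=[R,F,\ldots,F]$ with $c$ copies of $F$. *)

From Stdlib Require Import List.
Import ListNotations.

Record group := Group {
  carrier :> Type;
  gmul : carrier -> carrier -> carrier;
  ginv : carrier -> carrier;
  gone : carrier;
  gmulA : forall x y z, gmul x (gmul y z) = gmul (gmul x y) z;
  gmul1 : forall x, gmul gone x = x;
  gmulV : forall x, gmul (ginv x) x = gone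
}.

Arguments gmul {g}.
Arguments ginv {g}.
Arguments gone {g}.

Section GroupDefs.
Variable F : group.

Definition subset := F -> Prop.

Definition comm (x y : F) : F := gmul (gmul (ginv x) (ginv y)) (gmul x y).

(* left-normed iterated commutator [x, y1, ..., yn] *)
Definition comm_list (x : F) (l : list F) : F := fold_left comm l x.

Definition conj (x g : F) : F := gmul (ginv g) (gmul x g).

Definition incl (X Y : subset) : Prop := forall x, X x -> Y x.
Definition seteq (X Y : subset) : Prop := forall x, X x <-> Y x.
Definition setI (X Y : subset) : subset := fun x => X x /\ Y x.
Definition setU (X Y : subset) : subset := fun x => X x \/ Y x.
Definition setT : subset := fun _ => True.

Definition is_subgroup (H : subset) : Prop :=
  H gone /\ (forall x y, H x -> H y -> H (gmul x y)) /\ (forall x, H x -> H (ginv x)).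

Definition is_normal (H : subset) : Prop :=
  is_subgroup H /\ forall x g, H x -> H (conj x g).

Definition gen (X : subset) : subset :=
  fun x => forall H, is_subgroup H -> incl X H -> H x.

Definition ncl (X : subset) : subset :=
  gen (fun x => exists y g, X y /\ x = conj y g).

Definition setM (H K : subset) : subset :=
  fun x => exists h k, H h /\ K k /\ x = gmul h k.

Definition commg (H K : subset) : subset :=
  gen (fun x => exists h k, H h /\ K k /\ x = comm h k).

Fixpoint commg_iter (H K : subset) (c : nat) : subset :=
  match c with
  | O => H
  | S c' => commg (commg_iter H K c') K
  end.

(* gamma_{c+1}(H) = [H, _c H] *)
Definition lcs (H : subset) (c : nat) : subset := commg_iter H H c.

End GroupDefs.

Arguments incl {F}. Arguments seteq {F}. Arguments setI {F}. Arguments setU {F}.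
Arguments setT {F}. Arguments is_subgroup {F}. Arguments is_normal {F}.
Arguments gen {F}. Arguments ncl {F}. Arguments setM {F}. Arguments commg {F}.
Arguments commg_iter {F}. Arguments lcs {F}. Arguments comm {F}.
Arguments comm_list {F}. Arguments conj {F}.

Definition is_hom {F H : group} (phi : F -> H) : Prop :=
  forall x y, phi (gmul x y) = gmul (phi x) (phi y).

Definition is_hom_on {F H : group} (P : F -> Prop) (phi : F -> H) : Prop :=
  forall x y, P x -> P y -> phi (gmul x y) = gmul (phi x) (phi y).

Definition is_free_on (F : group) (X : F -> Prop) : Prop :=
  forall (H : group) (f : F -> H),
    exists phi : F -> H,
      is_hom phi /\ (forall x, X x -> phi x = f x) /\
      (forall psi : F -> H, is_hom psi -> (forall x, X x -> psi x = f x) ->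
         forall x, psi x = phi x).

Definition prodR2F1F2 {F : group} (R2 F1 F2 : F -> Prop) (c : nat) : F -> Prop :=
  ncl (fun x => exists r2 (l : list F),
         R2 r2 /\ length l = c /\ Forall (fun f => F1 f \/ F2 f) l /\
         Exists F1 l /\ x = comm_list r2 l).

(** The relators [f1^-1 f1' [f2,f1]] with [f1 = f1' = g], [f2 = r], and with [f1 = f2 = 1],
    [f1' = r], show that [S] contains [[R2,F1]] and [R1].  Hence [R2 S] is normalized by [F1]
    as well as by [F2], so it is normal and equals [R].  The endomorphism of [F1 * F2] killing
    [F1] and fixing [F2] kills [S]; so if [r s] ([r] in [R2], [s] in [S]) lies in
    [gamma_{c+1}(F)], its image [r] lies in [gamma_{c+1}(F2)].  Finally [[R,_c F]] is the
    normal closure of the commutators [[y,z1,...,zc]] with [y] in [R2 \/ S] and all [zi] in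
    [F1 \/ F2]; such a commutator lies in [[S,_c F]], in [prod[R2,F1,F2]_c] or in
    [[R2,_c F2]] according as [y] is in [S], some [zi] is in [F1], or neither.  The product
    of these three subgroups is normal because [F2] normalizes [[R2,_c F2]] and its
    commutators with [F1] lie in [prod[R2,F1,F2]_c]. *)

From Stdlib Require Import List Classical ClassicalEpsilon ProofIrrelevance.
Import ListNotations.

Section GroupLaws.
Context {F : group}.
Implicit Types x y : F.

Lemma mulgV x : gmul x (ginv x) = gone.
Proof.
  transitivity (gmul (gmul (ginv (ginv x)) (ginv x)) (gmul x (ginv x))).
  - rewrite gmulV, gmul1. reflexivity.
  - rewrite <- gmulA, (gmulA _ (ginv x) x), gmulV, gmul1, gmulV. reflexivity.
Qed.

Lemma mulg1 x : gmul x gone = x.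
Proof. rewrite <- (gmulV _ x), gmulA, mulgV, gmul1. reflexivity. Qed.

Lemma mulgA_r x y (z : F) : gmul (gmul x y) z = gmul x (gmul y z).
Proof. symmetry; apply gmulA. Qed.

Lemma mulKg x y : gmul (ginv x) (gmul x y) = y.
Proof. rewrite gmulA, gmulV, gmul1; reflexivity. Qed.

Lemma mulKVg x y : gmul x (gmul (ginv x) y) = y.
Proof. rewrite gmulA, mulgV, gmul1; reflexivity. Qed.

Lemma invg_unique x y : gmul x y = gone -> ginv x = y.
Proof. intros Hxy. rewrite <- (mulg1 (ginv x)), <- Hxy, mulKg. reflexivity. Qed.

Lemma invMg x y : ginv (gmul x y) = gmul (ginv y) (ginv x).
Proof. apply invg_unique. rewrite mulgA_r, mulKVg, mulgV. reflexivity. Qed.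

Lemma invgK x : ginv (ginv x) = x.
Proof. apply invg_unique, gmulV. Qed.

Lemma invg1 : ginv (gone : F) = gone.
Proof. apply invg_unique, gmul1. Qed.

End GroupLaws.

Global Hint Rewrite @mulgA_r @gmul1 @mulg1 @gmulV @mulgV @mulKg @mulKVg @invMg @invgK @invg1
  : group_simpl.

Ltac gsimpl := unfold comm, conj; autorewrite with group_simpl; try reflexivity.

Section Identities.
Context {F : group}.
Implicit Types x y z g h a b f r p : F.

Lemma conjM x y g : conj (gmul x y) g = gmul (conj x g) (conj y g).
Proof. gsimpl. Qed.

Lemma conjV x g : conj (ginv x) g = ginv (conj x g).
Proof. gsimpl. Qed.

Lemma conj1g g : conj gone g = gone.
Proof. gsimpl. Qed.

Lemma conjg1 x : conj x gone = x.
Proof. gsimpl. Qed.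

Lemma conjgM x a b : conj (conj x a) b = conj x (gmul a b).
Proof. gsimpl. Qed.

Lemma conjgK x a : conj (conj x a) (ginv a) = x.
Proof. gsimpl. Qed.

Lemma conjgKV x a : conj (conj x (ginv a)) a = x.
Proof. gsimpl. Qed.

Lemma conj_comm x y g : conj (comm x y) g = comm (conj x g) (conj y g).
Proof. gsimpl. Qed.

Lemma commMg x y f : comm (gmul x y) f = gmul (conj (comm x f) y) (comm y f).
Proof. gsimpl. Qed.

Lemma commVg x f : comm (ginv x) f = ginv (conj (comm x f) (ginv x)).
Proof. gsimpl. Qed.

Lemma comm1g f : comm gone f = gone.
Proof. gsimpl. Qed.

Lemma commgM y g h : comm y (gmul g h) = gmul (comm y h) (conj (comm y g) h).
Proof. gsimpl. Qed.

Lemma commgV y g : comm y (ginv g) = ginv (conj (comm y g) (ginv g)).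
Proof. gsimpl. Qed.

Lemma commg1 y : comm y gone = gone.
Proof. gsimpl. Qed.

Lemma comm_conjg y a f : comm (conj y a) f = conj (comm y (conj f (ginv a))) a.
Proof. gsimpl. Qed.

Lemma commE_conj r p : comm r p = gmul (ginv r) (conj r p).
Proof. gsimpl. Qed.

End Identities.

Section Subgroups.
Context {F : group}.
Implicit Types (X Y H K N P Q : subset F) (x y g : F).

Lemma sg1 H : is_subgroup H -> H gone.
Proof. intros [H1 _]; exact H1. Qed.

Lemma sgM H x y : is_subgroup H -> H x -> H y -> H (gmul x y).
Proof. intros [_ [HM _]]; apply HM. Qed.

Lemma sgV H x : is_subgroup H -> H x -> H (ginv x).
Proof. intros [_ [_ HV]]; apply HV. Qed.

Lemma sg_conj H x g : is_subgroup H -> H x -> H g -> H (conj x g).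
Proof. intros HH Hx Hg. unfold conj. repeat apply sgM; auto. apply sgV; auto. Qed.

Lemma sg_comm H x y : is_subgroup H -> H x -> H y -> H (comm x y).
Proof. intros HH Hx Hy. unfold comm. repeat apply sgM; auto; apply sgV; auto. Qed.

Lemma setT_subgroup : is_subgroup (@setT F).
Proof. repeat split. Qed.

Lemma gen_sub X : incl X (gen X).
Proof. intros x Hx H _ HXH. apply HXH, Hx. Qed.

Lemma gen_subgroup X : is_subgroup (gen X).
Proof.
  split; [|split].
  - intros H HH _. apply sg1, HH.
  - intros x y Hx Hy H HH HXH. apply sgM; [exact HH | apply Hx | apply Hy]; auto.
  - intros x Hx H HH HXH. apply sgV; [exact HH | apply Hx]; auto.
Qed.

Lemma gen_min X H : is_subgroup H -> incl X H -> incl (gen X) H.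
Proof. intros HH HXH x Hx. apply Hx; auto. Qed.

Lemma gen_mono X Y : incl X Y -> incl (gen X) (gen Y).
Proof. intros HXY. apply gen_min; [apply gen_subgroup|]. intros x Hx; apply gen_sub, HXY, Hx. Qed.

Lemma gen_conj X Q :
  (forall y g, X y -> Q g -> X (conj y g)) ->
  forall x g, gen X x -> Q g -> gen X (conj x g).
Proof.
  intros HX x g Hx Hg.
  refine (gen_min X (fun x => gen X (conj x g)) _ _ x Hx).
  - split; [|split].
    + rewrite conj1g. apply sg1, gen_subgroup.
    + intros a b Ha Hb. rewrite conjM. apply sgM; auto. apply gen_subgroup.
    + intros a Ha. rewrite conjV. apply sgV; auto. apply gen_subgroup.
  - intros y Hy. apply gen_sub, HX; auto.
Qed.

Lemma ncl_normal X : is_normal (ncl X).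
Proof.
  split; [apply gen_subgroup|].
  intros x g Hx. apply (gen_conj _ (fun _ => True)); auto.
  intros y h [z [a [Hz ->]]] _. exists z, (gmul a h). split; auto. apply conjgM.
Qed.

Lemma ncl_sub X : incl X (ncl X).
Proof. intros x Hx. apply gen_sub. exists x, gone. split; auto. symmetry; apply conjg1. Qed.

Lemma ncl_min X N : is_normal N -> incl X N -> incl (ncl X) N.
Proof.
  intros [HN HNc] HXN. apply gen_min; auto. intros x [y [g [Hy ->]]]. apply HNc, HXN, Hy.
Qed.

Lemma ncl_mono X Y : incl X Y -> incl (ncl X) (ncl Y).
Proof. intros HXY. apply ncl_min; [apply ncl_normal|]. intros x Hx; apply ncl_sub, HXY, Hx. Qed.

Lemma setM_subgroup H N : is_subgroup H -> is_normal N -> is_subgroup (setM H N).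
Proof.
  intros HH [HN HNc]. split; [|split].
  - exists gone, gone. split; [apply sg1, HH | split; [apply sg1, HN | gsimpl]].
  - intros x y [h [n [Hh [Hn ->]]]] [h' [n' [Hh' [Hn' ->]]]].
    exists (gmul h h'), (gmul (conj n h') n').
    split; [apply sgM; auto | split; [apply sgM; auto | gsimpl]].
  - intros x [h [n [Hh [Hn ->]]]]. exists (ginv h), (conj (ginv n) (ginv h)).
    repeat split; [apply sgV; auto | apply HNc, sgV; auto | gsimpl].
Qed.

Lemma setM_normal H N : is_normal H -> is_normal N -> is_normal (setM H N).
Proof.
  intros HH HN. split; [apply setM_subgroup; auto; apply HH|].
  intros x g [h [n [Hh [Hn ->]]]]. exists (conj h g), (conj n g).
  repeat split; [apply HH; auto | apply HN; auto | apply conjM].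
Qed.

Lemma setM_l H N x : is_subgroup N -> H x -> setM H N x.
Proof. intros HN Hx. exists x, gone. split; [exact Hx | split; [apply sg1, HN | gsimpl]]. Qed.

Lemma setM_r H N x : is_subgroup H -> N x -> setM H N x.
Proof. intros HH Hx. exists gone, x. split; [apply sg1, HH | split; [exact Hx | gsimpl]]. Qed.

Lemma setM_min H N K : is_subgroup K -> incl H K -> incl N K -> incl (setM H N) K.
Proof. intros HK HHK HNK x [h [n [Hh [Hn ->]]]]. apply sgM; auto. Qed.

Lemma normal_by_gens H Z :
  is_subgroup H -> (forall x, gen Z x) -> (forall g, Z g -> Z (ginv g)) ->
  (forall g x, Z g -> H x -> H (conj x g)) -> is_normal H.
Proof.
  intros HH HZ HZV Hc. split; auto.
  set (D := fun g => forall x, H x <-> H (conj x g)).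
  assert (HD : is_subgroup D).
  { split; [|split].
    - intros x. rewrite conjg1. tauto.
    - intros g h Hg Hh x. rewrite <- conjgM, (Hg x). apply Hh.
    - intros g Hg x. rewrite (Hg (conj x (ginv g))), conjgKV. tauto. }
  assert (HZD : incl Z D).
  { intros g Hg x. split; [apply Hc; auto|].
    intros Hx. rewrite <- (conjgK x g). apply Hc; auto. }
  intros x g Hx. apply (gen_min Z D HD HZD g (HZ g) x), Hx.
Qed.

Lemma subgroup_comm_into P Q M :
  is_subgroup P -> is_subgroup M -> (forall m p, M m -> P p -> M (conj m p)) ->
  is_subgroup (fun x => P x /\ forall f, Q f -> M (comm x f)).
Proof.
  intros HP HM Hc. split; [|split].
  - split; [apply sg1; auto|]. intros f _. rewrite comm1g. apply sg1; auto.
  - intros x y [Px Hx] [Py Hy]. split; [apply sgM; auto|].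
    intros f Hf. rewrite commMg. apply sgM; auto.
  - intros x [Px Hx]. split; [apply sgV; auto|].
    intros f Hf. rewrite commVg. apply sgV, Hc, sgV; auto.
Qed.

End Subgroups.

Section Homomorphisms.
Context {F H : group}.
Implicit Types (P X Y : subset F) (phi psi : F -> H) (x y : F).

Lemma hom_on1 P phi : is_subgroup P -> is_hom_on P phi -> phi gone = gone.
Proof.
  intros HP Hphi.
  assert (E : gmul (phi gone) (phi gone) = gmul gone (phi gone)).
  { rewrite <- Hphi, !gmul1 by (apply sg1; auto). reflexivity. }
  rewrite <- (mulKg (phi gone) (phi gone)), E. gsimpl.
Qed.

Lemma hom_onV P phi x : is_subgroup P -> is_hom_on P phi -> P x ->
  phi (ginv x) = ginv (phi x).
Proof.
  intros HP Hphi Hx. symmetry. apply invg_unique.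
  rewrite <- Hphi by (try apply sgV; auto). rewrite mulgV. apply (hom_on1 P); auto.
Qed.

Lemma hom_on_conj P phi x y : is_subgroup P -> is_hom_on P phi -> P x -> P y ->
  phi (conj x y) = conj (phi x) (phi y).
Proof.
  intros HP Hphi Hx Hy. unfold conj.
  rewrite !Hphi, (hom_onV P) by (auto; repeat apply sgM; auto; apply sgV; auto).
  reflexivity.
Qed.

Lemma hom_on_ker_subgroup P phi : is_subgroup P -> is_hom_on P phi ->
  is_subgroup (fun x => P x /\ phi x = gone).
Proof.
  intros HP Hphi. split; [|split].
  - split; [apply sg1 | apply (hom_on1 P)]; auto.
  - intros x y [Hx Ex] [Hy Ey]. split; [apply sgM; auto|].
    rewrite Hphi, Ex, Ey by auto. apply gmul1.
  - intros x [Hx Ex]. split; [apply sgV; auto|]. rewrite (hom_onV P), Ex by auto. apply invg1.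
Qed.

Lemma hom_on_ker_conj P phi x y : is_subgroup P -> is_hom_on P phi ->
  P x /\ phi x = gone -> P y -> P (conj x y) /\ phi (conj x y) = gone.
Proof.
  intros HP Hphi [Hx Ex] Hy. split; [apply sg_conj; auto|].
  rewrite (hom_on_conj P), Ex by auto. apply conj1g.
Qed.

Lemma hom_on_setT phi : is_hom phi -> is_hom_on setT phi.
Proof. intros Hphi x y _ _. apply Hphi. Qed.

Lemma hom1 phi : is_hom phi -> phi gone = gone.
Proof. intros Hphi. apply (hom_on1 setT); [apply setT_subgroup | apply hom_on_setT, Hphi]. Qed.

Lemma homV phi x : is_hom phi -> phi (ginv x) = ginv (phi x).
Proof.
  intros Hphi. apply (hom_onV setT); [apply setT_subgroup | apply hom_on_setT, Hphi | exact I].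
Qed.

Lemma hom_comm phi x y : is_hom phi -> phi (comm x y) = comm (phi x) (phi y).
Proof. intros Hphi. unfold comm. rewrite !Hphi, !homV by auto. reflexivity. Qed.

Lemma hom_conj phi x y : is_hom phi -> phi (conj x y) = conj (phi x) (phi y).
Proof. intros Hphi. unfold conj. rewrite !Hphi, !homV by auto. reflexivity. Qed.

Lemma hom_preim_subgroup phi (K : subset H) : is_hom phi -> is_subgroup K ->
  is_subgroup (fun x => K (phi x)).
Proof.
  intros Hphi HK. split; [|split].
  - rewrite hom1 by auto. apply sg1, HK.
  - intros x y Hx Hy. rewrite Hphi. apply sgM; auto.
  - intros x Hx. rewrite homV by auto. apply sgV; auto.
Qed.

Lemma hom_eq_gen X phi psi : is_hom phi -> is_hom psi ->
  (forall x, X x -> phi x = psi x) -> forall x, gen X x -> phi x = psi x.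
Proof.
  intros Hphi Hpsi HX. apply gen_min; auto. split; [|split].
  - rewrite !hom1 by auto. reflexivity.
  - intros x y Ex Ey. rewrite Hphi, Hpsi, Ex, Ey. reflexivity.
  - intros x Ex. rewrite !homV, Ex by auto. reflexivity.
Qed.

Lemma hom_ker_normal phi : is_hom phi -> is_normal (fun x => phi x = gone).
Proof.
  intros Hphi. split; [split; [|split]|].
  - apply hom1, Hphi.
  - intros x y Ex Ey. rewrite Hphi, Ex, Ey. apply gmul1.
  - intros x Ex. rewrite homV, Ex by auto. apply invg1.
  - intros x g Ex. rewrite hom_conj, Ex by auto. apply conj1g.
Qed.

End Homomorphisms.

Lemma id_hom {F : group} : is_hom (fun x : F => x).
Proof. intros x y. reflexivity. Qed.

Lemma one_hom {F H : group} : is_hom (fun _ : F => (gone : H)).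
Proof. intros x y. symmetry. apply gmul1. Qed.

Section SubgroupAsGroup.
Context {F : group} (P : subset F) (HP : is_subgroup P).

Definition subgroup_group : group.
Proof.
  refine (Group {x | P x}
    (fun a b => exist _ (gmul (proj1_sig a) (proj1_sig b))
                  (sgM P _ _ HP (proj2_sig a) (proj2_sig b)))
    (fun a => exist _ (ginv (proj1_sig a)) (sgV P _ HP (proj2_sig a)))
    (exist _ gone (sg1 P HP)) _ _ _);
  intros; apply eq_sig_hprop; try (intros; apply proof_irrelevance); simpl.
  - apply gmulA.
  - apply gmul1.
  - apply gmulV.
Defined.

End SubgroupAsGroup.

(* The inclusion of [gen X] into [F] and the identity of [F] agree on [X]; by uniqueness in
   the universal property they coincide, so every element lies in [gen X]. *)
Lemma free_gen (F : group) (X : subset F) : is_free_on F X -> forall x, gen X x.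
Proof.
  intros Hfree.
  set (GX := subgroup_group (gen X) (gen_subgroup X)).
  set (f := fun x : F => match excluded_middle_informative (gen X x) with
                         | left Hx => (exist _ x Hx : GX)
                         | right _ => (gone : GX) end).
  destruct (Hfree GX f) as [phi [Hphi [HphiX _]]].
  destruct (Hfree F (fun x => x)) as [phi0 [_ [_ Huniq]]].
  assert (Eincl : forall x, proj1_sig (phi x) = phi0 x).
  { apply Huniq.
    - intros x y. rewrite Hphi. reflexivity.
    - intros x Hx. rewrite HphiX by auto. unfold f.
      destruct (excluded_middle_informative (gen X x)) as [Hg|Hng]; [reflexivity|].
      exfalso. apply Hng, gen_sub, Hx. }
  assert (Eid : forall x, x = phi0 x) by (apply Huniq; [apply id_hom | reflexivity]).
  intros x. rewrite (Eid x), <- Eincl. apply (proj2_sig (phi x)).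
Qed.

Lemma free_retraction (F : group) (X1 X2 : subset F) :
  (forall x, X1 x -> X2 x -> False) -> is_free_on F (setU X1 X2) ->
  exists psi : F -> F, is_hom psi /\
    (forall x, gen X1 x -> psi x = gone) /\
    (forall x, gen X2 x -> psi x = x) /\
    (forall x, gen X2 (psi x)).
Proof.
  intros H12 Hfree.
  destruct (Hfree F (fun x => if excluded_middle_informative (X1 x) then gone else x))
    as [psi [Hpsi [HpsiX _]]].
  assert (psi_F1 : forall x, gen X1 x -> psi x = gone).
  { apply (hom_eq_gen X1 psi (fun _ => gone) Hpsi one_hom).
    intros x Hx. rewrite HpsiX by (left; auto).
    destruct (excluded_middle_informative (X1 x)); [reflexivity | contradiction]. }
  assert (psi_F2 : forall x, gen X2 x -> psi x = x).
  { apply (hom_eq_gen X2 psi (fun x => x) Hpsi id_hom).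
    intros x Hx. rewrite HpsiX by (right; auto).
    destruct (excluded_middle_informative (X1 x)); [exfalso; eauto | reflexivity]. }
  exists psi. repeat split; auto.
  intros x. refine (gen_min (setU X1 X2) (fun x => gen X2 (psi x)) _ _ x (free_gen _ _ Hfree x)).
  - apply hom_preim_subgroup; [exact Hpsi | apply gen_subgroup].
  - intros y [Hy|Hy].
    + rewrite psi_F1 by (apply gen_sub; auto). apply sg1, gen_subgroup.
    + rewrite psi_F2; apply gen_sub; auto.
Qed.

Section IteratedCommutators.
Context {F : group}.
Implicit Types (H K P Q X Y Z : subset F) (x y z a : F) (l : list F).

Lemma comm_list_rcons y z l : comm_list y (l ++ [z]) = comm (comm_list y l) z.
Proof. unfold comm_list. rewrite fold_left_app. reflexivity. Qed.

Lemma conj_comm_list y a l :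
  conj (comm_list y l) a = comm_list (conj y a) (map (fun f => conj f a) l).
Proof.
  revert y. induction l as [|z l IH]; intros y; [reflexivity|].
  change (conj (comm_list (comm y z) l) a =
          comm_list (comm (conj y a) (conj z a)) (map (fun f => conj f a) l)).
  rewrite IH, conj_comm. reflexivity.
Qed.

Definition comm_lists Y Z (c : nat) : subset F :=
  fun x => exists y l, Y y /\ length l = c /\ Forall Z l /\ x = comm_list y l.

Lemma commg_iter_subgroup H K c : is_subgroup H -> is_subgroup (commg_iter H K c).
Proof. intros HH. destruct c; simpl; [exact HH | apply gen_subgroup]. Qed.

Lemma commg_iter_min H K P c :
  is_subgroup P -> incl H P -> incl K P -> incl (commg_iter H K c) P.
Proof.
  intros HP HHP HKP. induction c as [|c IH]; simpl; auto.
  apply gen_min; auto. intros x [h [k [Hh [Hk ->]]]]. apply sg_comm; auto.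
Qed.

Lemma commg_iter_mono H K H' K' c :
  incl H H' -> incl K K' -> incl (commg_iter H K c) (commg_iter H' K' c).
Proof.
  intros HH' KK'. induction c as [|c IH]; simpl; auto. apply gen_mono.
  intros x [h [k [Hh [Hk ->]]]]. exists h, k; auto.
Qed.

Lemma commg_iter_conj H K Q c :
  (forall y g, H y -> Q g -> H (conj y g)) -> (forall y g, K y -> Q g -> K (conj y g)) ->
  forall x g, commg_iter H K c x -> Q g -> commg_iter H K c (conj x g).
Proof.
  intros HH HK. induction c as [|c IH]; simpl; auto.
  apply gen_conj. intros y g [h [k [Hh [Hk ->]]]] Hg. exists (conj h g), (conj k g).
  repeat split; auto. apply conj_comm.
Qed.

Lemma lcs_setT_subgroup c : is_subgroup (lcs (@setT F) c).
Proof. apply commg_iter_subgroup, setT_subgroup. Qed.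

Lemma commg_iter_normal H c : is_normal H -> is_normal (commg_iter H setT c).
Proof.
  intros HH. split; [apply commg_iter_subgroup, HH|].
  intros x g Hx. apply (commg_iter_conj _ _ (fun _ => True)); auto.
  intros y h Hy _. apply HH, Hy.
Qed.

Lemma comm_list_in H K y l :
  H y -> Forall K l -> commg_iter H K (length l) (comm_list y l).
Proof.
  intros Hy. induction l as [|z l IH] using rev_ind; intros Hl; simpl; auto.
  apply Forall_app in Hl. destruct Hl as [Hl Hz]. inversion Hz; subst.
  rewrite comm_list_rcons, length_app, PeanoNat.Nat.add_comm. simpl.
  apply gen_sub. exists (comm_list y l), z. auto.
Qed.

Lemma comm_lists_in H K c : incl (comm_lists H K c) (commg_iter H K c).
Proof. intros x [y [l [Hy [<- [Hl ->]]]]]. apply comm_list_in; auto. Qed.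

Lemma comm_lists_rcons Y Z c y z :
  comm_lists Y Z c y -> Z z -> comm_lists Y Z (S c) (comm y z).
Proof.
  intros [y0 [l [Hy0 [Hl [HZ ->]]]]] Hz. exists y0, (l ++ [z]).
  rewrite length_app, Hl, PeanoNat.Nat.add_comm, comm_list_rcons.
  repeat split; auto. apply Forall_app; auto.
Qed.

Lemma comm_ncl_sub Y Z : (forall x, gen Z x) ->
  forall x f, ncl Y x -> ncl (comm_lists Y Z 1) (comm x f).
Proof.
  intros HZ.
  set (M := ncl (comm_lists Y Z 1)).
  assert (HM : is_normal M) by apply ncl_normal.
  assert (HYF : forall y h, Y y -> M (comm y h)).
  { intros y h Hy.
    assert (Hs : is_subgroup (fun h => M (comm y h))).
    { split; [|split].
      - rewrite commg1. apply sg1, HM.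
      - intros g k Hg Hk. rewrite commgM. apply sgM; [apply HM | auto | apply HM; auto].
      - intros g Hg. rewrite commgV. apply sgV; [apply HM | apply HM; auto]. }
    apply (gen_min Z _ Hs); [|apply HZ].
    intros z Hz. apply ncl_sub. exists y, [z]. repeat split; auto. }
  assert (HW := subgroup_comm_into setT setT M setT_subgroup (proj1 HM)
                  (fun m p Hm _ => proj2 HM m p Hm)).
  intros x f Hx.
  refine (proj2 (gen_min _ _ HW _ x Hx) f I).
  intros w [y [a [Hy ->]]]. split; [exact I|]. intros g _. rewrite comm_conjg.
  apply HM, HYF, Hy.
Qed.

Lemma commg_iter_ncl R Y Z : (forall x, gen Z x) -> incl R (ncl Y) ->
  forall c, incl (commg_iter R setT c) (ncl (comm_lists Y Z c)).
Proof.
  intros HZ HR c. induction c as [|c IH]; simpl.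
  - intros x Hx. apply (ncl_mono Y); [|apply HR, Hx].
    intros w Hw. exists w, []. repeat split; auto.
  - apply gen_min; [apply ncl_normal|].
    intros w [x [f [Hx [_ ->]]]].
    refine (ncl_mono _ _ _ _ (comm_ncl_sub _ Z HZ x f (IH x Hx))).
    intros v [y [l [Hy [Hl [HZl ->]]]]].
    destruct l as [|z [|]]; try discriminate. inversion HZl; subst.
    apply comm_lists_rcons; auto.
Qed.

Lemma commg_iter_gen R P : is_subgroup P -> incl R P ->
  (forall r p, R r -> P p -> R (conj r p)) ->
  forall c, incl (commg_iter R P c) (gen (comm_lists R P c)).
Proof.
  intros HP HRP HRc c. induction c as [|c IH]; simpl.
  - intros x Hx. apply gen_sub. exists x, []. repeat split; auto.
  - assert (Hc : forall m p, gen (comm_lists R P (S c)) m -> P p ->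
                   gen (comm_lists R P (S c)) (conj m p)).
    { apply gen_conj. intros y p [r [l [Hr [Hl [HPl ->]]]]] Hp.
      exists (conj r p), (map (fun f => conj f p) l). repeat split.
      - apply HRc; auto.
      - rewrite length_map; auto.
      - apply Forall_map. eapply Forall_impl; [|exact HPl]. intros a Ha. apply sg_conj; auto.
      - apply conj_comm_list. }
    assert (HW := subgroup_comm_into P P _ HP (gen_subgroup _) Hc).
    apply gen_min; [apply gen_subgroup|].
    intros w [x [f [Hx [Hf ->]]]].
    refine (proj2 (gen_min _ _ HW _ x (IH x Hx)) f Hf).
    intros y Hy. split.
    + apply (commg_iter_min R P P c HP HRP (fun _ h => h)), comm_lists_in, Hy.
    + intros g Hg. apply gen_sub, comm_lists_rcons; auto.
Qed.

End IteratedCommutators.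

Lemma hom_commg_iter {F H : group} (psi : F -> H) (K1 K2 : subset F) (L1 L2 : subset H) c :
  is_hom psi -> (forall x, K1 x -> L1 (psi x)) -> (forall x, K2 x -> L2 (psi x)) ->
  is_subgroup L1 ->
  forall x, commg_iter K1 K2 c x -> commg_iter L1 L2 c (psi x).
Proof.
  intros Hpsi HK1 HK2 HL1. induction c as [|c IH]; simpl; auto.
  apply gen_min; [apply hom_preim_subgroup; [exact Hpsi | apply gen_subgroup]|].
  intros w [h [k [Hh [Hk ->]]]]. rewrite hom_comm by auto. apply gen_sub.
  exists (psi h), (psi k). auto.
Qed.

Section SemidirectPresentation.
Variables (G F : group) (X1 X2 : subset F) (nu1 nu2 : F -> G).
Hypothesis hnu1 : is_hom_on (gen X1) nu1.
Hypothesis hnu2 : is_hom_on (gen X2) nu2.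

Let F1 := gen X1.
Let F2 := gen X2.
Let R1 : subset F := fun x => F1 x /\ nu1 x = gone.
Let R2 : subset F := fun x => F2 x /\ nu2 x = gone.
Let S := ncl (fun x => exists f1 f1' f2, F1 f1 /\ F1 f1' /\ F2 f2 /\
                nu1 f1' = conj (nu1 f1) (nu2 f2) /\
                x = gmul (gmul (ginv f1) f1') (comm f2 f1)).
Let R := setM (setM (ncl R1) (ncl R2)) S.

Lemma R2_subgroup : is_subgroup R2.
Proof. exact (hom_on_ker_subgroup F2 nu2 (gen_subgroup X2) hnu2). Qed.

Lemma R2_conj r p : R2 r -> F2 p -> R2 (conj r p).
Proof. apply hom_on_ker_conj; [apply gen_subgroup | exact hnu2]. Qed.

Lemma R2_comm r p : R2 r -> F2 p -> R2 (comm r p).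
Proof.
  intros Hr Hp. rewrite commE_conj.
  apply sgM; [apply R2_subgroup | apply sgV; [apply R2_subgroup | exact Hr] | apply R2_conj; auto].
Qed.

Lemma R1_sub_S : incl R1 S.
Proof.
  intros r [Hr Er]. apply ncl_sub. exists gone, r, gone.
  assert (nu1 gone = gone) as E1 by (apply (hom_on1 F1); [apply gen_subgroup | exact hnu1]).
  assert (nu2 gone = gone) as E2 by (apply (hom_on1 F2); [apply gen_subgroup | exact hnu2]).
  repeat split; try apply sg1, gen_subgroup; auto.
  - rewrite Er, E1, E2, conj1g. reflexivity.
  - gsimpl.
Qed.

Lemma comm_R2_F1_in_S r g : R2 r -> F1 g -> S (comm r g).
Proof.
  intros [Hr Er] Hg. apply ncl_sub. exists g, g, r.
  repeat split; auto.
  - rewrite Er, conjg1. reflexivity.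
  - gsimpl.
Qed.

Lemma commg_R2_F1_sub_S : incl (commg R2 F1) S.
Proof.
  apply gen_min; [apply ncl_normal|].
  intros x [r [g [Hr [Hg ->]]]]. apply comm_R2_F1_in_S; auto.
Qed.

Lemma R_normal : is_normal R.
Proof. repeat apply setM_normal; apply ncl_normal. Qed.

Hypothesis hX12 : forall x, X1 x -> X2 x -> False.
Hypothesis hfree : is_free_on F (setU X1 X2).

Lemma F_gen_F1F2 x : gen (setU F1 F2) x.
Proof.
  refine (gen_mono _ _ _ x (free_gen _ _ hfree x)).
  intros y [Hy|Hy]; [left|right]; apply gen_sub; auto.
Qed.

Lemma F1F2_invg g : setU F1 F2 g -> setU F1 F2 (ginv g).
Proof. intros [Hg|Hg]; [left|right]; apply sgV; auto; apply gen_subgroup. Qed.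

(* Conjugating [r s] by [g] in [F1] gives [r ([r,g] s^g)] with [[r,g]] in [S]. *)
Lemma R2S_normal : is_normal (setM R2 S).
Proof.
  apply (normal_by_gens _ (setU F1 F2) (setM_subgroup _ _ R2_subgroup (ncl_normal _))
           F_gen_F1F2 F1F2_invg).
  intros g x [Hg|Hg] [r [s [Hr [Hs ->]]]].
  - exists r, (gmul (comm r g) (conj s g)). split; [exact Hr | split; [|gsimpl]].
    apply sgM; [apply ncl_normal | apply comm_R2_F1_in_S; auto | apply ncl_normal; auto].
  - exists (conj r g), (conj s g).
    split; [apply R2_conj; auto | split; [apply ncl_normal; auto | apply conjM]].
Qed.

Lemma R_eq_R2S : seteq R (setM R2 S).
Proof.
  assert (HR2S := R2S_normal). intros x; split.
  - revert x. apply setM_min; [apply HR2S | apply setM_min; [apply HR2S | |] |].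
    + apply ncl_min; [exact HR2S|]. intros y Hy. apply setM_r; [apply R2_subgroup|].
      apply R1_sub_S, Hy.
    + apply ncl_min; [exact HR2S|]. intros y Hy. apply setM_l; [apply ncl_normal | exact Hy].
    + intros y Hy. apply setM_r; [apply R2_subgroup | exact Hy].
  - intros [r [s [Hr [Hs ->]]]]. apply sgM; [apply R_normal | |].
    + apply setM_l; [apply ncl_normal|]. apply setM_r; [apply ncl_normal | apply ncl_sub, Hr].
    + apply setM_r; [apply setM_subgroup; apply ncl_normal | exact Hs].
Qed.

Lemma retraction_kills_S (psi : F -> F) : is_hom psi ->
  (forall x, F1 x -> psi x = gone) -> (forall x, F2 x -> psi x = x) ->
  forall x, S x -> psi x = gone.
Proof.
  intros Hpsi psi1 psi2. apply ncl_min; [apply hom_ker_normal, Hpsi|].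
  intros x [f1 [f1' [f2 [H1 [H1' [H2 [_ ->]]]]]]].
  rewrite !Hpsi, hom_comm, homV, (psi1 f1), (psi1 f1'), (psi2 f2); auto. gsimpl.
Qed.

Lemma R_cap_lcs c :
  seteq (setI R (lcs setT c)) (setM (setI R2 (lcs F2 c)) (setI S (lcs setT c))).
Proof.
  intros x. split.
  - intros [HRx Hx]. apply R_eq_R2S in HRx. destruct HRx as [r [s [Hr [Hs ->]]]].
    destruct (free_retraction F X1 X2 hX12 hfree) as [psi [Hpsi [psi1 [psi2 psiF2]]]].
    assert (Er : psi (gmul r s) = r).
    { rewrite Hpsi, (retraction_kills_S psi Hpsi psi1 psi2 s Hs), (psi2 r (proj1 Hr)).
      apply mulg1. }
    assert (Hrc : lcs F2 c r).
    { rewrite <- Er. exact (hom_commg_iter psi setT setT F2 F2 c Hpsi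
        (fun x _ => psiF2 x) (fun x _ => psiF2 x) (gen_subgroup X2) _ Hx). }
    assert (HrcT : lcs setT c r) by (apply (commg_iter_mono F2 F2 setT setT c); auto; easy).
    assert (HscT : lcs setT c s).
    { replace s with (gmul (ginv r) (gmul r s)) by apply mulKg.
      apply sgM; [apply lcs_setT_subgroup | apply sgV; [apply lcs_setT_subgroup|] |]; auto. }
    exists r, s. split; [split; auto | split; [split; auto | reflexivity]].
  - intros [r [s [[Hr Hrc] [[Hs Hsc] ->]]]]. split.
    + apply R_eq_R2S. exists r, s. auto.
    + apply sgM; [apply lcs_setT_subgroup | | exact Hsc].
      apply (commg_iter_mono F2 F2 setT setT c); auto; easy.
Qed.

Section LowerCentralTerms.
Variable c : nat.
Hypothesis hc : 1 <= c.

Let E2 := commg_iter R2 F2 c.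
Let Pc := prodR2F1F2 R2 F1 F2 c.
Let Sc := commg_iter S setT c.
Let T := setM (setM E2 Pc) Sc.

Lemma E2_subgroup : is_subgroup E2.
Proof. apply commg_iter_subgroup, R2_subgroup. Qed.

Lemma comm_E2_F1_in_Pc e g : E2 e -> F1 g -> Pc (comm e g).
Proof.
  intros He Hg.
  assert (HP : is_normal Pc) by apply ncl_normal.
  assert (HW := subgroup_comm_into setT (fun f => f = g) Pc setT_subgroup (proj1 HP)
                  (fun m p Hm _ => proj2 HP m p Hm)).
  assert (HR2F2 : incl R2 F2) by (intros r Hr; apply Hr).
  refine (proj2 (gen_min _ _ HW _ e
            (commg_iter_gen R2 F2 (gen_subgroup X2) HR2F2 R2_conj c e He)) g eq_refl).
  intros y [r [l [Hr [Hlen [Hl ->]]]]]. split; [exact I|]. intros f ->.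
  destruct l as [|f l]; [simpl in Hlen; subst c; inversion hc|].
  apply Forall_cons_iff in Hl as [Hf Hl].
  (* absorb the first entry into the relator, so the list keeps length [c] *)
  change (comm_list r (f :: l)) with (comm_list (comm r f) l).
  rewrite <- comm_list_rcons. apply ncl_sub.
  exists (comm r f), (l ++ [g]).
  split; [apply R2_comm; auto|].
  split; [rewrite length_app, <- Hlen, PeanoNat.Nat.add_comm; reflexivity|].
  split; [|split; [apply Exists_app; right; constructor; exact Hg | reflexivity]].
  apply Forall_app. split; [|constructor; [left; exact Hg | constructor]].
  eapply Forall_impl; [|exact Hl]. intros a Ha; right; exact Ha.
Qed.

Lemma T_normal : is_normal T.
Proof.
  assert (HP : is_normal Pc) by apply ncl_normal.
  assert (HSc : is_normal Sc) by apply commg_iter_normal, ncl_normal.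
  apply (normal_by_gens _ (setU F1 F2)); auto using F_gen_F1F2, F1F2_invg.
  { apply setM_subgroup; auto. apply setM_subgroup; auto. apply E2_subgroup. }
  intros g x [Hg|Hg] [ep [s [[e [p [He [Hp ->]]]] [Hs ->]]]].
  - exists (gmul e (gmul (comm e g) (conj p g))), (conj s g). split; [|split].
    + exists e, (gmul (comm e g) (conj p g)). split; [exact He | split; [|reflexivity]].
      apply sgM; [apply HP | apply comm_E2_F1_in_Pc; auto | apply HP; auto].
    + apply HSc; auto.
    + gsimpl.
  - exists (gmul (conj e g) (conj p g)), (conj s g). split; [|split].
    + exists (conj e g), (conj p g). split; [|split; [apply HP; auto | reflexivity]].
      apply (commg_iter_conj _ _ F2); auto using R2_conj.
      intros y h Hy Hh. apply sg_conj; auto. apply gen_subgroup.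
    + apply HSc; auto.
    + rewrite !conjM. reflexivity.
Qed.

Lemma commg_iter_R_sub : incl (commg_iter R setT c) T.
Proof.
  assert (HRY : incl R (ncl (setU R2 S))).
  { intros y Hy. apply R_eq_R2S in Hy. revert y Hy.
    apply setM_min; [apply ncl_normal | |]; intros y Hy; apply ncl_sub; [left|right]; exact Hy. }
  intros x Hx. apply (commg_iter_ncl R _ _ F_gen_F1F2 HRY c) in Hx. revert x Hx.
  apply ncl_min; [exact T_normal|].
  assert (HSc : is_normal Sc) by apply commg_iter_normal, ncl_normal.
  intros x [y [l [[Hy|Hy] [Hlen [Hl ->]]]]].
  - apply setM_l; [apply HSc|].
    destruct (classic (Exists F1 l)) as [Hex|Hnex].
    + apply setM_r; [apply E2_subgroup|]. apply ncl_sub. exists y, l. auto.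
    + apply setM_l; [apply ncl_normal|]. unfold E2. rewrite <- Hlen.
      apply comm_list_in; [exact Hy|]. apply Forall_forall. intros a Ha.
      destruct (proj1 (Forall_forall _ l) Hl a Ha) as [H1|H2]; [|exact H2].
      exfalso. apply Hnex, Exists_exists. eauto.
  - apply setM_r; [apply setM_subgroup; [apply E2_subgroup | apply ncl_normal]|].
    unfold Sc. rewrite <- Hlen. apply comm_list_in; [exact Hy|]. apply Forall_forall. easy.
Qed.

Lemma commg_iter_R_sup : incl T (commg_iter R setT c).
Proof.
  assert (HK : is_normal (commg_iter R setT c)) by apply commg_iter_normal, R_normal.
  assert (HR2R : incl R2 R).
  { intros r Hr. apply R_eq_R2S. apply setM_l; [apply ncl_normal | exact Hr]. }
  apply setM_min; [apply HK | apply setM_min; [apply HK | |] |].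
  - apply commg_iter_mono; [exact HR2R | easy].
  - apply ncl_min; [exact HK|]. intros y [r [l [Hr [Hlen [_ [_ ->]]]]]].
    rewrite <- Hlen. apply comm_list_in; [apply HR2R, Hr | apply Forall_forall; easy].
  - apply commg_iter_mono; [|easy]. intros s Hs. apply R_eq_R2S.
    apply setM_r; [apply R2_subgroup | exact Hs].
Qed.

End LowerCentralTerms.
End SemidirectPresentation.

Theorem theorem2p1
  (G : group) (A B : G -> Prop)
  (hA : is_normal A) (hB : is_subgroup B)
  (hGAB : seteq (gen (setU A B)) setT)
  (hAB : forall x, A x -> B x -> x = gone)
  (F : group) (X1 X2 : F -> Prop)
  (hX12 : forall x, X1 x -> X2 x -> False)
  (hfree : is_free_on F (setU X1 X2))
  (nu1 nu2 : F -> G)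
  (hnu1 : is_hom_on (gen X1) nu1)
  (hnu1A : forall a, A a <-> exists x, gen X1 x /\ nu1 x = a)
  (hnu2 : is_hom_on (gen X2) nu2)
  (hnu2B : forall b, B b <-> exists x, gen X2 x /\ nu2 x = b) :
  let F1 := gen X1 in
  let F2 := gen X2 in
  let R1 : F -> Prop := fun x => F1 x /\ nu1 x = gone in
  let R2 : F -> Prop := fun x => F2 x /\ nu2 x = gone in
  let S := ncl (fun x => exists f1 f1' f2, F1 f1 /\ F1 f1' /\ F2 f2 /\
                   nu1 f1' = conj (nu1 f1) (nu2 f2) /\
                   x = gmul (gmul (ginv f1) f1') (comm f2 f1)) in
  let R := setM (setM (ncl R1) (ncl R2)) S in
  (incl R1 S /\ incl (commg R2 F1) S) /\
  seteq R (setM R2 S) /\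
  (forall c, 1 <= c ->
     seteq (setI R (lcs setT c))
           (setM (setI R2 (lcs F2 c)) (setI S (lcs setT c)))) /\
  (forall c, 1 <= c ->
     seteq (commg_iter R setT c)
           (setM (setM (commg_iter R2 F2 c) (prodR2F1F2 R2 F1 F2 c))
                 (commg_iter S setT c))).
Proof.
  intros F1 F2 R1 R2 S R.
  split; [split|split; [|split]].
  - apply R1_sub_S; assumption.
  - apply commg_R2_F1_sub_S.
  - apply R_eq_R2S; assumption.
  - intros c _. apply R_cap_lcs; assumption.
  - intros c hc x. split.
    + apply commg_iter_R_sub; assumption.
    + apply commg_iter_R_sup; assumption.
Qed.
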